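(* Let $n\ge1$, $\boldsymbol z\in\{0,1\}^n$ and $\boldsymbol y,\boldsymbol y'\in\overline{\mathbb R}^n$ satisfy $y_i\le y_i'$ whenever $z_i=1$ and $y_i\ge y_i'$ whenever $z_i=0$. Then $t_{\mathrm R,\phi}(\boldsymbol z,\boldsymbol y)\le t_{\mathrm R,\phi}(\boldsymbol z,\boldsymbol y')$, where $t_{\mathrm R,\phi}$ is either the rank-sum statistic or the Mann–Whitney-type statistic defined below.
   Context: $\overline{\mathbb R}=\mathbb R\cup\{\pm\infty\}$. For $1\le i,j\le n$ and $y,y'\in\overline{\mathbb R}$, $\psi_{i,j}(y,y')=\mathbf 1\{y>y'\}+\mathbf 1\{y=y'\}\mathbf 1\{i\ge j\}$; for $\boldsymbol y\in\overline{\mathbb R}^n$, $\mathrm{rank}_i(\boldsymbol y)=\sum_{j=1}^n\psi_{i,j}(y_i,y_j)$. $\phi$ is a fixed nondecreasing real function on the nonnegative integers. Rank-sum statistic: $t_{\mathrm R,\phi}(\boldsymbol z,\boldsymbol y)=\sum_{i=1}^nz_i\phi(\mathrm{rank}_i(\boldsymbol y))$. Mann–Whitney-type statistic: $t_{\mathrm R,\phi}(\boldsymbol z,\boldsymbol y)=\sum_{i=1}^nz_i\phi\big(\sum_{j=1}^n(1-z_j)\psi_{i,j}(y_i,y_j)\big)$. *)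

From mathcomp Require Import all_boot all_order all_algebra.
From mathcomp Require Import reals constructive_ereal.
Set Implicit Arguments. Unset Strict Implicit. Unset Printing Implicit Defensive.
Import Order.TTheory GRing.Theory Num.Theory.
Local Open Scope ring_scope.

(* Extended reals \bar R = R ∪ {±oo}, for R a realType.  Indices 1..n are
   represented by 'I_n (0..n-1); the order i >= j is preserved. *)

Definition psi (n : nat) (i j : 'I_n) {R : realType} (y y' : \bar R) : nat :=
  ((y' < y)%E : nat) + ((y == y') && (j <= i)%N : nat).

Definition rank_ (R : realType) (n : nat) (y : 'I_n -> \bar R) (i : 'I_n) : nat :=
  (\sum_(j < n) psi i j (y i) (y j))%N.

Definition t_rank_sum (R : realType) (phi : nat -> R) (n : nat)
    (z : 'I_n -> bool) (y : 'I_n -> \bar R) : R :=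
  \sum_(i < n) (z i)%:R * phi (rank_ y i).

Definition t_mann_whitney (R : realType) (phi : nat -> R) (n : nat)
    (z : 'I_n -> bool) (y : 'I_n -> \bar R) : R :=
  \sum_(i < n) (z i)%:R *
     phi (\sum_(j < n) (1 - z j) * psi i j (y i) (y j))%N.

From mathcomp Require Import all_boot all_order all_algebra.
From mathcomp Require Import reals constructive_ereal.
Set Implicit Arguments. Unset Strict Implicit. Unset Printing Implicit Defensive.
Import Order.TTheory GRing.Theory Num.Theory.

(* Order the units lexicographically by the key (y_i, i).  Then
   psi_{i,j}(y_i, y_j) says that key_j <= key_i, and rank_i(y) is the position
   of unit i in this total order, so the ranks of all units are a permutation
   of 1..n.  Raising treated units and lowering controls keeps every control
   that was below a treated unit below it; this gives the Mann-Whitney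
   inequality term by term.  For the rank sum, write
   phi r = phi 0 + sum_(k < r) (phi (k+1) - phi k): it suffices that for every
   k at least as many treated units have rank > k under y' as under y.  If some
   treated unit i has rank > k under y but not under y', every control of
   rank > k under y' lies above i under y', hence above i under y, so it has
   rank > k under y; as the same number of units have rank > k under either
   vector, the treated ones cannot lose. *)

Section OrderRank.
Context {disp : Order.disp_t} {T : orderType disp} {I : finType} (f : I -> T).
Hypothesis f_inj : injective f.

Definition order_rank (i : I) : nat := #|[pred j | (f j <= f i)%O]|.

Lemma leq_order_rank i j : (order_rank j <= order_rank i) = (f j <= f i)%O.
Proof.
have [fji|fij] := leP (f j) (f i).
  by apply/subset_leq_card/subsetP => k; rewrite !inE => /le_trans; apply.
apply/negbTE; rewrite -ltnNge; apply/proper_card/properP; split.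
  by apply/subsetP => k; rewrite !inE => /le_trans; apply; apply: ltW.
by exists j; rewrite !inE ?lexx // leNgt fij.
Qed.

Lemma order_rank_inj : injective order_rank.
Proof.
move=> i j eq_ij; apply: f_inj; apply: le_anti.
by rewrite -!leq_order_rank eq_ij leqnn.
Qed.

Lemma perm_order_ranks : perm_eq (codom order_rank) (iota 1 #|I|).
Proof.
have ranks_in_iota : {subset codom order_rank <= iota 1 #|I|}.
  move=> _ /codomP[i ->]; rewrite mem_iota add1n ltnS max_card andbT.
  by apply/card_gt0P; exists i; rewrite inE.
have uniq_ranks : uniq (codom order_rank).
  by rewrite (map_inj_uniq order_rank_inj) enum_uniq.
apply: uniq_perm; rewrite ?iota_uniq //.
by case: (uniq_min_size uniq_ranks ranks_in_iota); rewrite ?size_codom ?size_iota.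
Qed.

Lemma card_order_rank_preim (Q : pred nat) :
  #|[pred i | Q (order_rank i)]| = count Q (iota 1 #|I|).
Proof.
by rewrite -(permP perm_order_ranks) count_map -size_filter cardE enumT.
Qed.

End OrderRank.

Section RankKey.
Variables (R : realType) (n : nat).
Implicit Types x : 'I_n -> \bar R.

Definition rank_key x (i : 'I_n) : \bar R *l 'I_n := (x i, i).

Lemma rank_key_inj x : injective (rank_key x).
Proof. by move=> i j [_]. Qed.

Lemma psi_rank_key x i j :
  psi i j (x i) (x j) = (rank_key x j <= rank_key x i)%O.
Proof.
rewrite /psi Order.ProdLexiOrder.lexi_pair /=.
by have [] := ltgtP (x j) (x i).
Qed.

Lemma rankE x : rank_ x =1 order_rank (rank_key x).
Proof.
move=> i; rewrite /rank_ /order_rank -sum1_card [RHS]big_mkcond /=.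
by apply: eq_bigr => j _; rewrite psi_rank_key inE; case: (_ <= _)%O.
Qed.

End RankKey.

Section ShiftTreatedUp.
Variables (R : realType) (n : nat) (z : 'I_n -> bool) (y y' : 'I_n -> \bar R).
Hypothesis treated_up : forall i, z i -> (y i <= y' i)%E.
Hypothesis control_down : forall i, ~~ z i -> (y' i <= y i)%E.

Lemma le_rank_key_shift i j : z i -> ~~ z j ->
  (rank_key y j <= rank_key y i)%O -> (rank_key y' j <= rank_key y' i)%O.
Proof.
move=> zi zj; rewrite !Order.ProdLexiOrder.lexi_pair /= => /andP[yji tie].
apply/andP; split.
  by rewrite (le_trans (control_down zj)) // (le_trans yji) // treated_up.
apply/implyP => y'ij; apply: (implyP tie).
by rewrite (le_trans (treated_up zi)) // (le_trans y'ij) // control_down.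
Qed.

Lemma leq_psi_shift i j : z i -> ~~ z j ->
  psi i j (y i) (y j) <= psi i j (y' i) (y' j).
Proof.
move=> zi zj; rewrite !psi_rank_key.
by case: (boolP (_ <= _)%O) => // /(le_rank_key_shift zi zj) ->.
Qed.

Lemma leq_card_treated_rank_gt k :
  #|[pred i | z i && (k < rank_ y i)]| <= #|[pred i | z i && (k < rank_ y' i)]|.
Proof.
have rank_tail x : #|[pred i | z i && (k < rank_ x i)]| =
    #|[pred i | z i && (k < order_rank (rank_key x) i)]|.
  by apply: eq_card => i; rewrite !inE rankE.
rewrite !rank_tail; set r := order_rank _; set r' := order_rank _.
have split_tail (s : 'I_n -> nat) : #|[pred i | k < s i]| =
    #|[pred i | z i && (k < s i)]| + #|[pred i | ~~ z i && (k < s i)]|.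
  by rewrite -(cardID z); congr (_ + _); apply: eq_card => i; rewrite !inE andbC.
have same_tail : #|[pred i | k < r i]| = #|[pred i | k < r' i]|.
  by rewrite !(card_order_rank_preim (@rank_key_inj _ _ _) (fun m => k < m)).
have [|/subsetPn[i /andP[zi ri]]] :=
  boolP ([pred i | z i && (k < r i)] \subset [pred i | z i && (k < r' i)]).
  exact: subset_leq_card.
rewrite inE zi /= -leqNgt => r'i.
have controls :
    #|[pred j | ~~ z j && (k < r' j)]| <= #|[pred j | ~~ z j && (k < r j)]|.
  apply/subset_leq_card/subsetP => j /andP[zj r'j]; rewrite inE zj /=.
  have : r' i < r' j by exact: leq_ltn_trans r'j.
  rewrite ltnNge leq_order_rank ?rank_key_inj // => /negP y'ji.
  have yji : ~~ (rank_key y j <= rank_key y i)%O.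
    by apply/negP => /(le_rank_key_shift zi zj).
  by rewrite (ltn_trans ri) // ltnNge leq_order_rank ?rank_key_inj.
rewrite -(leq_add2r #|[pred j | ~~ z j && (k < r' j)]|) -(split_tail r').
by rewrite -same_tail (split_tail r) leq_add2l.
Qed.

End ShiftTreatedUp.

Local Open Scope ring_scope.

Lemma telescope_widen (V : zmodType) (phi : nat -> V) m N : (m <= N)%N ->
  phi m = phi 0%N + \sum_(k < N | (k < m)%N) (phi k.+1 - phi k).
Proof.
move=> mN; rewrite -(big_ord_widen _ (fun k => phi k.+1 - phi k) mN).
by rewrite -(big_mkord xpredT (fun k => phi k.+1 - phi k)) telescope_sumr // addrC subrK.
Qed.

Lemma sum_layer_cake (V : zmodType) (phi : nat -> V) (I : finType) (P : pred I)
    (h : I -> nat) N :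
  (forall i, P i -> h i <= N)%N ->
  \sum_(i | P i) phi (h i) =
    phi 0%N *+ #|P| + \sum_(k < N) (phi k.+1 - phi k) *+ #|[pred i | P i && (k < h i)%N]|.
Proof.
move=> hN; under eq_bigr => i Pi do rewrite (telescope_widen phi (hN i Pi)).
rewrite big_split sumr_const /=; congr (_ + _).
by rewrite (exchange_big_dep xpredT) //=; apply: eq_bigr => k _; rewrite sumr_const.
Qed.

Lemma ler_sum_layer_cake (R : numDomainType) (phi : nat -> R) (I : finType) (P : pred I)
    (f g : I -> nat) :
  {homo phi : a b / (a <= b)%N >-> a <= b} ->
  (forall k, #|[pred i | P i && (k < f i)%N]| <= #|[pred i | P i && (k < g i)%N]|)%N ->
  \sum_(i | P i) phi (f i) <= \sum_(i | P i) phi (g i).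
Proof.
move=> phi_mono fg; set N := (\max_i maxn (f i) (g i))%N.
have fN i : P i -> (f i <= N)%N.
  by move=> _; rewrite (leq_trans (leq_maxl _ (g i))) ?(leq_bigmax i).
have gN i : P i -> (g i <= N)%N.
  by move=> _; rewrite (leq_trans (leq_maxr (f i) _)) ?(leq_bigmax i).
rewrite (sum_layer_cake phi fN) (sum_layer_cake phi gN) lerD2l.
by apply: ler_sum => k _; apply: ler_wpMn2l; rewrite ?subr_ge0 ?phi_mono.
Qed.

Lemma sum_boolr_mul (V : pzSemiRingType) (I : finType) (b : I -> bool) (F : I -> V) :
  \sum_i (b i)%:R * F i = \sum_(i | b i) F i.
Proof.
by rewrite [RHS]big_mkcond; apply: eq_bigr => i _; case: (b i); rewrite ?mul1r ?mul0r.
Qed.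

Theorem lemma1 (R : realType) (phi : nat -> R)
    (phi_mono : forall a b : nat, (a <= b)%N -> phi a <= phi b)
    (n : nat) (hn : (1 <= n)%N)
    (z : 'I_n -> bool) (y y' : 'I_n -> \bar R)
    (h1 : forall i, z i -> (y i <= y' i)%E)
    (h0 : forall i, ~~ z i -> (y' i <= y i)%E) :
  t_rank_sum phi z y <= t_rank_sum phi z y' /\
  t_mann_whitney phi z y <= t_mann_whitney phi z y'.
Proof.
rewrite /t_rank_sum /t_mann_whitney !sum_boolr_mul; split.
  by apply: ler_sum_layer_cake => // k; apply: leq_card_treated_rank_gt h1 h0 k.
apply: ler_sum => i zi; apply: phi_mono; apply: leq_sum => j _.
case zj: (z j); first by rewrite subn1 !mul0n.
by rewrite subn0 !mul1n (leq_psi_shift h1 h0 zi (negbT zj)).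
Qed.
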